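(* Let $G$ be the directed graph with vertices $v_1,v_2,v_3,\dots$ and $w_2,w_3,\dots$ (all distinct), and edges $v_i\to v_{i+1}$ for $i\ge1$, $v_1\to w_2$, and $w_i\to w_{i+1}$ for $i\ge2$, with birthdates $t(v_i)=i$ and $t(w_i)=i$. (Writing $w_1=v_1$, $G$ consists of two infinite directed paths sharing only their initial vertex.) Then $(G,t)$ is an infinite biosphere, and $v_1$ does not belong to any maximal element of $\mathrm{IAP}\cap\mathrm{CONV}\cap\mathrm{CA}$ (i.e., there is no $S\in \mathrm{IAP}\cap\mathrm{CONV}\cap\mathrm{CA}$ with $v_1\in S$ such that no proper superset of $S$ lies in $\mathrm{IAP}\cap\mathrm{CONV}\cap\mathrm{CA}$).
   Context: An infinite biosphere is a directed graph $G$ together with a function $t$ assigning a real number $t(v)$ to each vertex, such that: (1) if $v$ is a parent of $w$ (edge from $v$ to $w$) then $t(v)<t(w)$; (2) for every $r\in\mathbb R$ at most finitely many vertices $v$ have $t(v)<r$; (3) every vertex has finitely many children; (4) $G$ is infinite. $v$ is an ancestor of $w$ (and $w$ a descendant of $v$) if there is a directed path $v=v_1,\dots,v_n=w$ with $n>1$. $\mathrm{IAP}$: sets $S$ of vertices such that no $v\in S$ has both infinitely many descendants in $S$ and infinitely many non-descendants in $S$. $\mathrm{CONV}$: sets $S$ such that every vertex having an ancestor in $S$ and a descendant in $S$ lies in $S$. $\mathrm{CA}$: sets $S$ for which there exists $v\in S$ such that every $w\in S$ with $w\neq v$ is a descendant of $v$. *)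

From Stdlib Require Import Reals List Relations.
Open Scope R_scope.

Definition finite_pred {V : Type} (P : V -> Prop) : Prop :=
  exists l : list V, forall x, P x -> In x l.

Definition infinite_pred {V : Type} (P : V -> Prop) : Prop := ~ finite_pred P.

Definition infinite_biosphere {V : Type} (E : V -> V -> Prop) (t : V -> R) : Prop :=
  (forall v w, E v w -> t v < t w) /\
  (forall r : R, finite_pred (fun v => t v < r)) /\
  (forall v, finite_pred (fun w => E v w)) /\
  infinite_pred (fun _ : V => True).

Definition ancestor {V : Type} (E : V -> V -> Prop) : V -> V -> Prop :=
  clos_trans V E.

Definition IAP {V : Type} (E : V -> V -> Prop) (S : V -> Prop) : Prop :=
  forall v, S v ->
    ~ (infinite_pred (fun w => S w /\ ancestor E v w) /\
       infinite_pred (fun w => S w /\ ~ ancestor E v w)).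

Definition CONV {V : Type} (E : V -> V -> Prop) (S : V -> Prop) : Prop :=
  forall x, (exists a, S a /\ ancestor E a x) ->
            (exists d, S d /\ ancestor E x d) -> S x.

Definition CA {V : Type} (E : V -> V -> Prop) (S : V -> Prop) : Prop :=
  exists v, S v /\ forall w, S w -> w <> v -> ancestor E v w.

Definition IAP_CONV_CA {V : Type} (E : V -> V -> Prop) (S : V -> Prop) : Prop :=
  IAP E S /\ CONV E S /\ CA E S.

(* vv k represents v_{k+1} (k >= 0); ww k represents w_{k+2} (k >= 0). *)
Inductive vtx : Type :=
| vv : nat -> vtx
| ww : nat -> vtx.

Inductive edge : vtx -> vtx -> Prop :=
| edge_vv : forall k, edge (vv k) (vv (S k))
| edge_vw : edge (vv 0) (ww 0)
| edge_ww : forall k, edge (ww k) (ww (S k)).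

Definition tdate (x : vtx) : R :=
  match x with
  | vv k => INR (k + 1)
  | ww k => INR (k + 2)
  end.

Definition v1 : vtx := vv 0.

(* The root v1 is an ancestor of every other vertex, so a set containing v1 lies in
   IAP ∩ CONV ∩ CA exactly when it is ancestor-closed and IAP.  Applying IAP at a vertex
   of one branch shows that one of the two branches meets S only finitely, say below
   depth N.  Adding to S all ancestors of the branch vertex at depth N keeps S
   ancestor-closed, and keeps it IAP because only finitely many vertices were added and
   each new vertex has only finitely many descendants in the enlarged set.  This is a
   proper superset, so S is not maximal. *)

From Stdlib Require Import Reals List Relations.
From Stdlib Require Import Lia Lra Classical.

Lemma finite_pred_incl {V : Type} (P Q : V -> Prop) :
  (forall x, P x -> Q x) -> finite_pred Q -> finite_pred P.
Proof. intros PQ [l Hl]; exists l; auto. Qed.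

Lemma finite_pred_union {V : Type} (P Q : V -> Prop) :
  finite_pred P -> finite_pred Q -> finite_pred (fun x => P x \/ Q x).
Proof.
  intros [l Hl] [m Hm]; exists (l ++ m).
  intros x [Px|Qx]; apply in_or_app; auto.
Qed.

Section Ancestry.

Context {V : Type} (E : V -> V -> Prop).

Definition ancestor_closed (A : V -> Prop) : Prop :=
  forall x y, A y -> ancestor E x y -> A x.

Definition down (y : V) (x : V) : Prop := x = y \/ ancestor E x y.

Definition is_root (r : V) : Prop := forall x, x <> r -> ancestor E r x.

Lemma ancestor_chain (f : nat -> V) :
  (forall k, E (f k) (f (S k))) -> forall i j, (i < j)%nat -> ancestor E (f i) (f j).
Proof.
  intros Hf i j; induction j as [|j IH]; intro Hij; [lia|].
  destruct (Nat.eq_dec i j) as [->|Hne]; [now apply t_step|].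
  apply t_trans with (f j); [apply IH; lia | now apply t_step].
Qed.

Lemma ancestor_closed_down (y : V) : ancestor_closed (down y).
Proof.
  intros x z [->|Hzy] Hxz; right; [exact Hxz | exact (t_trans _ _ _ _ _ Hxz Hzy)].
Qed.

Lemma ancestor_closed_union (A B : V -> Prop) :
  ancestor_closed A -> ancestor_closed B -> ancestor_closed (fun x => A x \/ B x).
Proof. intros HA HB x y [Ay|By] Hxy; [left; exact (HA x y Ay Hxy) | right; exact (HB x y By Hxy)]. Qed.

Lemma ancestor_closed_CONV (A : V -> Prop) : ancestor_closed A -> CONV E A.
Proof. intros HA x _ [d [Ad Hxd]]; exact (HA x d Ad Hxd). Qed.

Lemma root_CONV_ancestor_closed (r : V) (A : V -> Prop) :
  is_root r -> A r -> CONV E A -> ancestor_closed A.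
Proof.
  intros Hr Ar HC x y Ay Hxy.
  destruct (classic (x = r)) as [->|Hxr]; [exact Ar|].
  apply HC; [exists r | exists y]; auto.
Qed.

Lemma root_CA (r : V) (A : V -> Prop) : is_root r -> A r -> CA E A.
Proof. intros Hr Ar; exists r; split; [exact Ar | intros w _; apply Hr]. Qed.

(* The counts of descendants and non-descendants change only by a finite amount at the
   old vertices; the new ones are handled by hypothesis. *)
Lemma IAP_union_finite (A F : V -> Prop) :
  IAP E A -> finite_pred F ->
  (forall x, F x -> ~ A x -> finite_pred (fun w => (A w \/ F w) /\ ancestor E x w)) ->
  IAP E (fun x => A x \/ F x).
Proof.
  intros HA HF Hnew x Hx [Hdesc Hnondesc].
  destruct (classic (A x)) as [Ax|nAx].
  - apply (HA x Ax); split; intro Hfin.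
    + apply Hdesc, finite_pred_incl with (2 := finite_pred_union _ _ Hfin HF).
      intros w [[Aw|Fw] Hw]; tauto.
    + apply Hnondesc, finite_pred_incl with (2 := finite_pred_union _ _ Hfin HF).
      intros w [[Aw|Fw] Hw]; tauto.
  - destruct Hx as [Ax|Fx]; [contradiction|].
    exact (Hdesc (Hnew x Fx nAx)).
Qed.

Lemma IAP_CONV_CA_extend (r y : V) (A : V -> Prop) :
  is_root r -> A r -> IAP E A -> ancestor_closed A -> finite_pred (down y) ->
  (forall x, down y x -> ~ A x ->
     finite_pred (fun w => (A w \/ down y w) /\ ancestor E x w)) ->
  IAP_CONV_CA E (fun x => A x \/ down y x).
Proof.
  intros Hr Ar HI Hcl Hfin Hnew; split; [|split].
  - exact (IAP_union_finite _ _ HI Hfin Hnew).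
  - apply ancestor_closed_CONV, ancestor_closed_union; [exact Hcl | apply ancestor_closed_down].
  - apply root_CA with r; [exact Hr | left; exact Ar].
Qed.

Lemma ancestor_lt (t : V -> R) :
  (forall v w, E v w -> t v < t w) -> forall x y, ancestor E x y -> t x < t y.
Proof. intros Ht x y Hxy; induction Hxy; eauto using Rlt_trans. Qed.

Lemma finite_down (t : V -> R) :
  (forall v w, E v w -> t v < t w) -> (forall r, finite_pred (fun v => t v < r)) ->
  forall y, finite_pred (down y).
Proof.
  intros Ht Hfin y; apply finite_pred_incl with (2 := Hfin (t y + 1)).
  intros x [->|Hxy]; [lra|]. pose proof (ancestor_lt t Ht x y Hxy); lra.
Qed.

End Ancestry.

Definition idx (x : vtx) : nat := match x with vv k => k | ww k => k end.

Definition vtx_ancestor (x y : vtx) : Prop :=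
  match x, y with
  | vv i, vv j => (i < j)%nat
  | vv i, ww _ => i = 0%nat
  | ww i, ww j => (i < j)%nat
  | ww _, vv _ => False
  end.

Lemma ancestor_edge_iff (x y : vtx) : ancestor edge x y <-> vtx_ancestor x y.
Proof.
  split.
  - intro Hxy; induction Hxy as [x y Hxy|x y z _ IHxy _ IHyz].
    + destruct Hxy; simpl; lia.
    + destruct x, y, z; simpl in *; lia.
  - destruct x as [i|i], y as [j|j]; simpl; intro Hij; try contradiction.
    + apply (ancestor_chain _ vv); [constructor | exact Hij].
    + subst i.
      (* the path v1, w2, w3, ... *)
      set (f k := match k with O => vv 0 | S k => ww k end).
      change (ancestor edge (f 0%nat) (f (S j))).
      apply (ancestor_chain _ f); [intros [|k]; constructor | lia].
    + apply (ancestor_chain _ ww); [constructor | exact Hij].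
Qed.

Lemma finite_pred_vtx_iff (P : vtx -> Prop) :
  finite_pred P <-> exists N, forall x, P x -> (idx x < N)%nat.
Proof.
  split.
  - intros [l Hl].
    assert (Hbound : exists N, forall x, In x l -> (idx x < N)%nat).
    { clear Hl; induction l as [|a l [N HN]]; [exists 0%nat; simpl; tauto|].
      exists (Nat.max N (S (idx a))); intros x [<-|Hx]; [lia | specialize (HN x Hx); lia]. }
    destruct Hbound as [N HN]; exists N; auto.
  - intros [N HN]; exists (map vv (seq 0 N) ++ map ww (seq 0 N)).
    intros x Hx; specialize (HN x Hx); apply in_or_app.
    destruct x; simpl in HN; [left|right]; apply in_map, in_seq; lia.
Qed.

Lemma tdate_edge_lt (v w : vtx) : edge v w -> tdate v < tdate w.
Proof. intros []; apply lt_INR; lia. Qed.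

Lemma tdate_sublevel_finite (r : R) : finite_pred (fun v => tdate v < r).
Proof.
  apply finite_pred_vtx_iff; destruct (INR_unbounded r) as [n Hn]; exists n.
  intros [k|k] Hk; simpl in Hk |- *.
  - assert (Hlt : INR (k + 1) < INR n) by lra; apply INR_lt in Hlt; lia.
  - assert (Hlt : INR (k + 2) < INR n) by lra; apply INR_lt in Hlt; lia.
Qed.

Lemma biosphere_edge_tdate : infinite_biosphere edge tdate.
Proof.
  split; [exact tdate_edge_lt | split; [exact tdate_sublevel_finite | split]].
  - intro v; exists (match v with vv k => vv (S k) :: ww 0 :: nil | ww k => ww (S k) :: nil end).
    intros w []; simpl; tauto.
  - intro Hfin; apply finite_pred_vtx_iff in Hfin as [N HN].
    specialize (HN (vv N) I); simpl in HN; lia.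
Qed.

Lemma v1_root : is_root edge v1.
Proof.
  unfold v1; intros [[|k]|k] Hx; apply ancestor_edge_iff; simpl; [contradiction (Hx eq_refl) | lia | reflexivity].
Qed.

Lemma IAP_branch_bounded (A : vtx -> Prop) :
  IAP edge A ->
  (exists N, forall j, A (ww j) -> (j < N)%nat) \/
  (exists N, forall j, A (vv j) -> (j < N)%nat).
Proof.
  intro HI.
  destruct (classic (exists N, forall j, A (vv j) -> (j < N)%nat)) as [Hv|Hv]; [now right|left].
  assert (Hk : exists k, A (vv k) /\ (1 <= k)%nat).
  { apply NNPP; intro Hk; apply Hv; exists 1%nat; intros j Aj.
    apply NNPP; intro Hj; apply Hk; exists j; split; [exact Aj | lia]. }
  destruct Hk as [k [Ak Hk1]].
  assert (Hdesc : infinite_pred (fun w => A w /\ ancestor edge (vv k) w)).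
  { intro Hfin; apply finite_pred_vtx_iff in Hfin as [M HM]; apply Hv.
    exists (Nat.max M (S k)); intros j Aj.
    destruct (Nat.lt_ge_cases k j) as [Hkj|]; [|lia].
    assert (j < M)%nat by (apply (HM (vv j)); split; [exact Aj | apply ancestor_edge_iff; exact Hkj]).
    lia. }
  assert (Hnon : finite_pred (fun w => A w /\ ~ ancestor edge (vv k) w))
    by (apply NNPP; intro Hnon; exact (HI (vv k) Ak (conj Hdesc Hnon))).
  apply finite_pred_vtx_iff in Hnon as [M HM]; exists M; intros j Aj.
  apply (HM (ww j)); split; [exact Aj|].
  rewrite ancestor_edge_iff; simpl; lia.
Qed.

Lemma extend_ww_branch (A : vtx -> Prop) (N : nat) :
  IAP edge A -> ancestor_closed edge A -> A v1 -> (forall j, A (ww j) -> (j < N)%nat) ->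
  IAP_CONV_CA edge (fun x => A x \/ down edge (ww N) x).
Proof.
  intros HI Hcl Av1 HN.
  apply IAP_CONV_CA_extend with v1; auto using v1_root.
  { exact (finite_down _ _ tdate_edge_lt tdate_sublevel_finite _). }
  intros x Hx nAx.
  assert (Hxw : exists i, x = ww i).
  { destruct x as [[|i]|i]; [contradiction (nAx Av1) | | eauto].
    destruct Hx as [Hx|Hx]; [discriminate | apply ancestor_edge_iff in Hx; simpl in Hx; lia]. }
  destruct Hxw as [i ->]; apply finite_pred_vtx_iff; exists (S N).
  intros [j|j] [Ay Hxy]; apply ancestor_edge_iff in Hxy; simpl in Hxy |- *; [contradiction|].
  destruct Ay as [Ay|[[= ->]|Ay]]; [apply HN in Ay | | apply ancestor_edge_iff in Ay; simpl in Ay]; lia.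
Qed.

Lemma extend_vv_branch (A : vtx -> Prop) (N : nat) :
  IAP edge A -> ancestor_closed edge A -> A v1 -> (forall j, A (vv j) -> (j < N)%nat) ->
  IAP_CONV_CA edge (fun x => A x \/ down edge (vv N) x).
Proof.
  intros HI Hcl Av1 HN.
  apply IAP_CONV_CA_extend with v1; auto using v1_root.
  { exact (finite_down _ _ tdate_edge_lt tdate_sublevel_finite _). }
  intros x Hx nAx.
  assert (Hxv : exists i, x = vv (S i)).
  { destruct x as [[|i]|i]; [contradiction (nAx Av1) | eauto |].
    destruct Hx as [Hx|Hx]; [discriminate | apply ancestor_edge_iff in Hx; contradiction]. }
  destruct Hxv as [i ->]; apply finite_pred_vtx_iff; exists (S N).
  intros [j|j] [Ay Hxy]; apply ancestor_edge_iff in Hxy; simpl in Hxy |- *; [|lia].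
  destruct Ay as [Ay|[[= ->]|Ay]]; [apply HN in Ay | | apply ancestor_edge_iff in Ay; simpl in Ay]; lia.
Qed.

Theorem mainTheorem10 :
  infinite_biosphere edge tdate /\
  ~ (exists S : vtx -> Prop,
       IAP_CONV_CA edge S /\ S v1 /\
       forall S' : vtx -> Prop, IAP_CONV_CA edge S' ->
         (forall x, S x -> S' x) -> (forall x, S' x -> S x)).
Proof.
  split; [exact biosphere_edge_tdate|].
  intros [A [[HI [HC _]] [Av1 Hmax]]].
  pose proof (root_CONV_ancestor_closed _ _ _ v1_root Av1 HC) as Hcl.
  destruct (IAP_branch_bounded A HI) as [[N HN]|[N HN]].
  - assert (Hnew : A (ww N)).
    { apply (Hmax _ (extend_ww_branch A N HI Hcl Av1 HN)); [now left | right; now left]. }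
    specialize (HN N Hnew); lia.
  - assert (Hnew : A (vv N)).
    { apply (Hmax _ (extend_vv_branch A N HI Hcl Av1 HN)); [now left | right; now left]. }
    specialize (HN N Hnew); lia.
Qed.
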